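(* For every $\varepsilon\in(0,\tfrac12)$ there is an $n_0=n_0(\varepsilon)$ such that the following holds for all $n>n_0$. Let $G=(A,B;E_G)$ and $H=(S,T;E_H)$ be bipartite graphs with $|A|=|B|=|S|=|T|=n$ satisfying: (1) $d_G(x)>\left(\tfrac12+\varepsilon\right)n$ for all $x\in A\cup B$; (2) $d_H(x)<\dfrac{\varepsilon^4}{100}\cdot\dfrac{n}{\log n}$ for all $x\in S$; (3) $d_H(y)=1$ for all $y\in T$. Then $H\subseteq G$, i.e. $G$ contains a subgraph isomorphic to $H$ via an isomorphism mapping $S$ onto $A$ and $T$ onto $B$.
   Context: All graphs are simple. $d_G(v)$ denotes the degree of vertex $v$ in graph $G$. For a bipartite graph written $G=(A,B;E)$, $A$ and $B$ are its two vertex classes. *)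

From mathcomp Require Import all_boot.
From Stdlib Require Import Reals.
Set Implicit Arguments. Unset Strict Implicit. Unset Printing Implicit Defensive.

(* A bipartite graph (X, Y; E) with |X| = |Y| = n is encoded by its
   biadjacency relation E : 'I_n -> 'I_n -> bool (x in X adjacent to y in Y). *)
Definition bigraph (n : nat) := 'I_n -> 'I_n -> bool.

Definition degL n (E : bigraph n) (x : 'I_n) : nat := #|[set y | E x y]|.
Definition degR n (E : bigraph n) (y : 'I_n) : nat := #|[set x | E x y]|.

Definition bip_embeds n (H G : bigraph n) : Prop :=
  exists (phi psi : 'I_n -> 'I_n),
    bijective phi /\ bijective psi /\
    forall s t, H s t -> G (phi s) (psi t).

From HB Require Import structures.
From mathcomp Require Import all_boot zify.
From Stdlib Require Import Reals Lra Psatz Classical.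

(* H is a disjoint union of stars: every leaf t in T has a unique neighbour, its
   centre, and the centre s carries d(s) = d_H(s) leaves, with sum_s d(s) = n.
   First map the centres bijectively onto A so that, for every b in B, the centres
   landing outside N_G(b) carry less than n/2 leaves.  For a uniformly random
   bijection this weight has mean |A \ N_G(b)| < (1/2 - eps) n, and since every
   d(s) is at most eps^4 n / (100 log n) an exponential-moment potential, kept from
   increasing by placing the centres one at a time (heaviest first, method of
   conditional expectations), keeps all n weights within eps n of their means.
   Then match B with the leaves by Hall's theorem, b being joined to t when b is
   adjacent to the image of the centre of t: a set Z of B either sees every
   centre, hence all n leaves, or misses the image a of some centre, so that
   |Z| <= n - d_G(a), while any single b in Z already sees more than n/2 leaves. *)

Set Implicit Arguments. Unset Strict Implicit.

HB.instance Definition _ := Monoid.isComLaw.Build R R0 Rplus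
  (fun x y z => esym (Rplus_assoc x y z)) Rplus_comm Rplus_0_l.

Open Scope R_scope.

Section RealSums.
Variables (I : finType) (A : {pred I}).

Lemma rsum_le (F G : I -> R) :
  (forall i, i \in A -> F i <= G i) ->
  \big[Rplus/0]_(i in A) F i <= \big[Rplus/0]_(i in A) G i.
Proof. by move=> FG; apply: (big_ind2 (fun x y => x <= y)) => *; [lra | lra | exact: FG]. Qed.

Lemma rsum_ge0 (F : I -> R) :
  (forall i, i \in A -> 0 <= F i) -> 0 <= \big[Rplus/0]_(i in A) F i.
Proof. by move=> F0; apply: (big_ind (fun x => 0 <= x)) => *; [lra | lra | exact: F0]. Qed.

Lemma rsum_mulr (F : I -> R) c :
  \big[Rplus/0]_(i in A) (c * F i) = c * \big[Rplus/0]_(i in A) F i.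
Proof. by rewrite (big_endo (Rmult c)) => [|x y|]; rewrite ?Rmult_plus_distr_l ?Rmult_0_r. Qed.

(* [big_split] restated so that the operator stays [Rplus], as [lra] and [field] need. *)
Lemma rsum_add (F G : I -> R) :
  \big[Rplus/0]_(i in A) (F i + G i) = \big[Rplus/0]_(i in A) F i + \big[Rplus/0]_(i in A) G i.
Proof. exact: big_split. Qed.

Lemma rsum_opp (F : I -> R) :
  \big[Rplus/0]_(i in A) (- F i) = - \big[Rplus/0]_(i in A) F i.
Proof. by rewrite (big_endo Ropp) => [|x y|]; rewrite ?Ropp_plus_distr ?Ropp_0. Qed.

Lemma INR_sum (F : I -> nat) :
  INR (\sum_(i in A) F i)%nat = \big[Rplus/0]_(i in A) INR (F i).
Proof. by rewrite (big_morph INR plus_INR (erefl (INR 0))). Qed.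

Lemma rsum_const c : \big[Rplus/0]_(i in A) c = INR #|A| * c.
Proof.
rewrite -sum1_card INR_sum Rmult_comm -rsum_mulr.
by apply: eq_bigr => i _; rewrite /= Rmult_1_r.
Qed.

Lemma rsum_ge_term (F : I -> R) j : j \in A ->
  (forall i, i \in A -> 0 <= F i) -> F j <= \big[Rplus/0]_(i in A) F i.
Proof.
move=> Aj F0; rewrite (bigD1 j) //=.
suff : 0 <= \big[Rplus/0]_(i | (i \in A) && (i != j)) F i by lra.
by apply: (big_ind (fun x => 0 <= x)) => [|x y|i /andP[/F0]] //; lra.
Qed.

Lemma exists_le_average (F : I -> R) c : (exists i, i \in A) ->
  \big[Rplus/0]_(i in A) F i = INR #|A| * c -> exists2 i, i \in A & F i <= c.
Proof.
move=> [i0 Ai0] sumF; apply: NNPP => noi.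
have cF i : i \in A -> c < F i.
  by move=> Ai; apply: Rnot_le_lt => Fic; apply: noi; exists i.
have F_c_ge0 i : i \in A -> 0 <= F i - c by move=> /cF; lra.
have := rsum_ge_term Ai0 F_c_ge0.
rewrite /Rminus rsum_add rsum_opp rsum_const sumF.
have := cF i0 Ai0; lra.
Qed.

End RealSums.

Lemma rsum_setT (I : finType) (F : I -> R) :
  \big[Rplus/0]_(i in setT) F i = \big[Rplus/0]_i F i.
Proof. by apply: eq_bigl => i; rewrite in_setT. Qed.

Lemma exp_le_mono x y : x <= y -> exp x <= exp y.
Proof. by case/Rle_lt_or_eq_dec => [/exp_increasing/Rlt_le | ->] //; apply: Rle_refl. Qed.

(* For u >= 0 use exp x <= 1/(1 - x); for u = -v < 0 use
   exp (v + v^2) >= (1 + (v + v^2)/2)^2 >= 1/(1 - v). *)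
Lemma exp_sub_sqr_le u : -1/4 <= u <= 1/4 -> exp (u - u ^ 2) <= 1 + u.
Proof.
move=> u_small; have exp_gt0 := exp_pos (u - u ^ 2).
case: (Rle_lt_dec 0 u) => u_sign.
- have inv : exp (u - u ^ 2) * exp (- (u - u ^ 2)) = 1.
    by rewrite -exp_plus Rplus_opp_r exp_0.
  have exp_ge := exp_ineq1_le (- (u - u ^ 2)).
  have : exp (u - u ^ 2) * (1 - (u - u ^ 2)) <= 1 by nra.
  nra.
- set v := - u; have v_bd : 0 < v <= 1/4 by rewrite /v; lra.
  set w := (v + v ^ 2) / 2; have w_ge0 : 0 <= w by rewrite /w; nra.
  have exp_w := exp_ineq1_le w.
  have exp_2w : exp (v + v ^ 2) = exp w * exp w by rewrite -exp_plus /w; f_equal; field.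
  have inv : exp (u - u ^ 2) * exp (v + v ^ 2) = 1.
    by rewrite -exp_plus -exp_0 /v; f_equal; ring.
  have sq_le : (1 + w) * (1 + w) <= exp (v + v ^ 2).
    by rewrite exp_2w; apply: Rmult_le_compat; lra.
  have poly : (1 - v) * ((1 + w) * (1 + w)) >= 1.
    have : v ^ 2 * (1/4 - 3/4 * v - 1/4 * v ^ 2 - 1/4 * v ^ 3) >= 0.
      by apply: Rle_ge; apply: Rmult_le_pos; nra.
    rewrite /w; nra.
  have : (1 - v) * exp (v + v ^ 2) >= 1 by nra.
  rewrite /v in inv *; nra.
Qed.

Lemma exp_shift_le l x d0 : 0 <= l -> l * d0 <= 1/4 -> -d0 <= x <= d0 ->
  exp (l * x - l ^ 2 * d0 ^ 2) <= 1 + l * x.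
Proof.
move=> l_ge0 ld0 x_d0; have lx : -1/4 <= l * x <= 1/4 by split; nra.
apply: Rle_trans (exp_sub_sqr_le lx); apply: exp_le_mono.
have : 0 <= (d0 - x) * (d0 + x) by apply: Rmult_le_pos; lra.
have : 0 <= l ^ 2 by nra.
nra.
Qed.

(* With k = u / r the quantity is (d0 - k) (e r - y) / (r + 1), where
   0 <= k <= d0 and |e r - y| <= r. *)
Lemma mean_shift_bound d0 u y r e : 0 <= d0 -> 0 <= u <= r * d0 -> 0 <= y <= r ->
  (e = 0 \/ e = 1) -> -d0 <= d0 * e + u * y / r - (d0 + u) * (e + y) / (r + 1) <= d0.
Proof.
move=> d0_ge0 u_bd y_bd e01.
have [r0 | r_gt0] : r = 0 \/ 0 < r by lra.
  have u0 : u = 0 by nra.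
  have y0 : y = 0 by lra.
  by subst; rewrite /Rdiv; case: e01 => ->; split; ring_simplify; lra.
set k := u / r.
have u_k : u = k * r by rewrite /k; field; lra.
have k_bd : 0 <= k <= d0 by split; nra.
have -> : d0 * e + u * y / r - (d0 + u) * (e + y) / (r + 1) = (d0 - k) * (e * r - y) / (r + 1).
  by rewrite u_k; field; lra.
have num_bd : - (d0 * r) <= (d0 - k) * (e * r - y) <= d0 * r by case: e01 => ->; split; nra.
set z := _ / (r + 1); have : (d0 - k) * (e * r - y) = z * (r + 1) by rewrite /z; field; lra.
split; nra.
Qed.

Section Injections.
Variables U V : finType.

Definition injects (f : U -> V) (D : {set U}) (C : {set V}) :=
  {in D, forall x, f x \in C} /\ {in D &, injective f}.

Lemma injects_glue (Z D : {set U}) (C1 C2 : {set V}) f1 f2 :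
  Z \subset D -> [disjoint C1 & C2] -> injects f1 Z C1 -> injects f2 (D :\: Z) C2 ->
  injects (fun x => if x \in Z then f1 x else f2 x) D (C1 :|: C2).
Proof.
move=> sZD C12 [f1C f1I] [f2C f2I].
have DZ x : x \in D -> x \notin Z -> x \in D :\: Z by move=> Dx xZ; rewrite inE xZ.
have sep x y : x \in Z -> y \in D -> y \notin Z -> f1 x != f2 y.
  move=> xZ Dy yZ; apply: contraTneq C12 => e.
  by apply/pred0Pn; exists (f1 x); rewrite /= f1C // e f2C ?DZ.
split=> [x Dx | x y Dx Dy]; first by case: ifP => xZ; rewrite inE (f1C, f2C) ?orbT ?DZ ?xZ.
case: ifPn => xZ; case: ifPn => yZ.
- exact: f1I.
- by move/eqP; rewrite (negPf (sep x y xZ Dy yZ)).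
- by move/esym/eqP; rewrite (negPf (sep y x yZ Dx xZ)).
- by apply: f2I; rewrite DZ.
Qed.

End Injections.

Lemma cardsI_D1 (T : finType) (A C : {set T}) a : a \in C ->
  #|A :&: C| = ((a \in A) + #|A :&: (C :\ a)|)%nat.
Proof. by move=> Ca; rewrite (cardsD1 a) inE Ca andbT setIDA. Qed.

Lemma sum_mem_card (T : finType) (A C : {set T}) :
  \big[Rplus/0]_(a in C) INR (a \in A) = INR #|A :&: C|.
Proof.
rewrite -INR_sum -sum1_card; congr INR; rewrite big_mkcond [RHS]big_mkcond.
by apply: eq_bigr => a _; rewrite inE; case: (a \in A); case: (a \in C).
Qed.

Lemma card_setD1_eq (T : finType) (RS RA : {set T}) s0 a :
  s0 \in RS -> a \in RA -> #|RS| = #|RA| -> #|RA :\ a| = #|RS :\ s0|.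
Proof. by move=> RSs0 RAa; rewrite (cardsD1 s0 RS) (cardsD1 a RA) RSs0 RAa => -[]. Qed.

Section Potential.
Variables (T B : finType) (d : T -> nat) (X : B -> {set T}) (lam : R).
Hypothesis lam_ge0 : 0 <= lam.
Hypothesis lam_d : forall s, lam * INR (d s) <= 1/4.

Definition weight (RS : {set T}) := \big[Rplus/0]_(s in RS) INR (d s).
Definition sq_weight (RS : {set T}) := \big[Rplus/0]_(s in RS) INR (d s) ^ 2.
Definition hit_weight (RS : {set T}) (f : T -> T) b :=
  \big[Rplus/0]_(s in RS) (if f s \in X b then INR (d s) else 0).

(* The expectation of [hit_weight RS f b] for a uniformly random bijection
   [f : RS -> RA], and its change when [s0] is sent to [a]. *)
Definition mean_hit (RS RA : {set T}) b := weight RS * INR #|X b :&: RA| / INR #|RA|.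
Definition mean_shift RS RA s0 b a :=
  INR (d s0) * INR (a \in X b) + mean_hit (RS :\ s0) (RA :\ a) b - mean_hit RS RA b.

Definition potential RS RA f b :=
  exp (lam * (hit_weight RS f b - mean_hit RS RA b) - lam ^ 2 * sq_weight RS).

Lemma weight_setD1 (RS : {set T}) s0 :
  s0 \in RS -> weight RS = INR (d s0) + weight (RS :\ s0).
Proof. exact: big_setD1. Qed.

Lemma sq_weight_le (RS : {set T}) m :
  {in RS, forall s, d s <= m}%nat -> sq_weight RS <= INR m * weight RS.
Proof.
move=> d_le; rewrite /weight -rsum_mulr; apply: rsum_le => s RSs.
by rewrite /= Rmult_1_r; apply: Rmult_le_compat_r; [apply: pos_INR | apply/le_INR/leP/d_le].
Qed.

Lemma mean_shift_sum (RS RA : {set T}) s0 b : s0 \in RS -> #|RS| = #|RA| ->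
  \big[Rplus/0]_(a in RA) mean_shift RS RA s0 b a = 0.
Proof.
move=> RSs0 card_eq; set r := #|RS :\ s0|; set u := weight (RS :\ s0).
set y := INR #|X b :&: RA|.
have cardRA : INR #|RA| = INR r + 1 by rewrite -card_eq (cardsD1 s0) RSs0 plus_INR Rplus_comm.
have sum_shift : \big[Rplus/0]_(a in RA) mean_hit (RS :\ s0) (RA :\ a) b = u * y.
  transitivity (\big[Rplus/0]_(a in RA) (u / INR r * (y + - INR (a \in X b)))).
    apply: eq_bigr => a RAa; rewrite /mean_hit (card_setD1_eq RSs0 RAa card_eq) -/u -/r.
    by rewrite /y (cardsI_D1 (X b) RAa) plus_INR /Rdiv; ring.
  rewrite rsum_mulr rsum_add rsum_opp rsum_const sum_mem_card -/y cardRA.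
  have [r0 | r_gt0] : INR r = 0 \/ 0 < INR r by have := pos_INR r; lra.
    have /cards0_eq RS'0 : #|RS :\ s0| = 0%nat by apply: INR_eq.
    have -> : u = 0 by rewrite /u /weight RS'0 big_set0.
    by rewrite /Rdiv; ring.
  by field; lra.
rewrite /mean_shift !rsum_add rsum_mulr sum_mem_card sum_shift.
rewrite rsum_opp rsum_const /mean_hit (weight_setD1 RSs0) -/u -/y cardRA.
by field; have := pos_INR r; lra.
Qed.

Lemma mean_shift_bounded (RS RA : {set T}) s0 b a :
  s0 \in RS -> {in RS, forall s, d s <= d s0}%nat -> #|RS| = #|RA| -> a \in RA ->
  -INR (d s0) <= mean_shift RS RA s0 b a <= INR (d s0).
Proof.
move=> RSs0 s0_max card_eq RAa; set r := #|RS :\ s0|.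
have cardRA : INR #|RA| = INR r + 1 by rewrite -card_eq (cardsD1 s0) RSs0 plus_INR Rplus_comm.
rewrite /mean_shift /mean_hit (card_setD1_eq RSs0 RAa card_eq) -/r cardRA.
rewrite (weight_setD1 RSs0) (cardsI_D1 (X b) RAa) !plus_INR.
apply: mean_shift_bound; first exact: pos_INR.
- split; first by apply: rsum_ge0 => s _; apply: pos_INR.
  rewrite -rsum_const; apply: rsum_le => s /setD1P[_ RSs]; apply: le_INR; apply/leP.
  exact: s0_max.
- split; first exact: pos_INR.
  apply: le_INR; apply/leP; rewrite /r -(card_setD1_eq RSs0 RAa card_eq).
  exact/subset_leq_card/subsetIr.
- by case: (a \in X b); [right | left].
Qed.

Lemma potential_extend (RS RA : {set T}) s0 a f b : s0 \in RS ->
  potential RS RA (fun s => if s \in [set s0] then a else f s) b =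
  potential (RS :\ s0) (RA :\ a) f b
  * exp (lam * mean_shift RS RA s0 b a - lam ^ 2 * INR (d s0) ^ 2).
Proof.
move=> RSs0; rewrite /potential -exp_plus /hit_weight /sq_weight !(big_setD1 s0 RSs0) /=.
rewrite set11; under eq_bigr => s /setD1P[ne _] do rewrite in_set1 (negPf ne).
by congr exp; rewrite /mean_shift; case: (a \in X b) => /=; ring.
Qed.

Lemma potential_set0 f b : potential set0 set0 f b = 1.
Proof.
rewrite /potential /hit_weight /mean_hit /weight /sq_weight !big_set0 cards0 /=.
by rewrite -exp_0; congr exp; rewrite /Rdiv; ring.
Qed.

Lemma potential_extend_le (RS RA : {set T}) s0 a f b :
  s0 \in RS -> {in RS, forall s, d s <= d s0}%nat -> #|RS| = #|RA| -> a \in RA ->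
  potential RS RA (fun s => if s \in [set s0] then a else f s) b
  <= (1 + lam * mean_shift RS RA s0 b a) * potential (RS :\ s0) (RA :\ a) f b.
Proof.
move=> RSs0 s0_max card_eq RAa; rewrite potential_extend // Rmult_comm.
apply: Rmult_le_compat_r; first exact/Rlt_le/exp_pos.
exact/exp_shift_le/mean_shift_bounded.
Qed.

Lemma exists_good_image (RS RA : {set T}) s0 (p : B -> R) :
  s0 \in RS -> #|RS| = #|RA| -> (exists a, a \in RA) ->
  exists2 a, a \in RA & \big[Rplus/0]_b (p b * (1 + lam * mean_shift RS RA s0 b a))
                        <= \big[Rplus/0]_b p b.
Proof.
move=> RSs0 card_eq RA_n0; apply: exists_le_average => //.
rewrite exchange_big /= -rsum_mulr; apply: eq_bigr => b _.
rewrite rsum_mulr rsum_add rsum_const rsum_mulr mean_shift_sum //.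
by rewrite Rmult_0_r Rplus_0_r Rmult_1_r Rmult_comm.
Qed.

Lemma greedy_injection (RS RA : {set T}) (p : B -> R) :
  #|RS| = #|RA| -> (forall b, 0 <= p b) ->
  exists f, injects f RS RA /\
    \big[Rplus/0]_b (p b * potential RS RA f b) <= \big[Rplus/0]_b p b.
Proof.
move eq_r : #|RS| => r; elim: r RS RA p eq_r => [|r IH] RS RA p cardRS cardRA p_ge0.
  move/cards0_eq: cardRS => ->; move/esym/cards0_eq: cardRA => ->.
  exists (fun s => s); split; first by split=> x; rewrite inE.
  by apply: Req_le; apply: eq_bigr => b _; rewrite potential_set0 Rmult_1_r.
have card_eq : #|RS| = #|RA| by rewrite cardRS.
have [s1 RSs1] : exists s1, s1 \in RS by apply/set0Pn; rewrite -card_gt0 cardRS.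
have [s0 RSs0 s0_max] : exists2 s0, s0 \in RS & {in RS, forall s, d s <= d s0}%nat.
  by case: (arg_maxnP d RSs1) => s0; exists s0.
have RA_n0 : exists a, a \in RA by apply/set0Pn; rewrite -card_gt0 -cardRA.
have [a RAa avg] := exists_good_image p RSs0 card_eq RA_n0.
set p' := fun b => p b * (1 + lam * mean_shift RS RA s0 b a).
have p'_ge0 b : 0 <= p' b.
  apply: Rmult_le_pos => //; have := mean_shift_bounded b RSs0 s0_max card_eq RAa.
  by have := lam_d s0; nra.
have cardRS' : #|RS :\ s0| = r by move: cardRS; rewrite (cardsD1 s0) RSs0 => -[].
have [f [f_inj f_pot]] := IH (RS :\ s0) (RA :\ a) p' cardRS'
  (esym (etrans (card_setD1_eq RSs0 RAa card_eq) cardRS')) p'_ge0.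
exists (fun s => if s \in [set s0] then a else f s); split.
  rewrite -(setD1K RAa); apply: injects_glue => //; first by rewrite sub1set.
    by rewrite disjoints1 !inE eqxx.
  by split=> [x _ | x y /set1P -> /set1P ->]; rewrite ?set11.
apply: Rle_trans avg; apply: Rle_trans f_pot; apply: rsum_le => b _.
rewrite /p' Rmult_assoc; apply: Rmult_le_compat_l => //.
exact: potential_extend_le.
Qed.

Lemma exists_injection_low_potential : exists f : T -> T, injective f /\
  forall b, lam * (hit_weight setT f b - mean_hit setT setT b) - lam ^ 2 * sq_weight setT
            <= ln (INR #|B|).
Proof.
have [f [[_ f_inj] pot_le]] :=
  @greedy_injection setT setT (fun _ => 1) erefl (fun _ => Rle_0_1).
exists f; split=> [x y | b]; first by apply: f_inj; rewrite inE.
have pot_b : potential setT setT f b <= INR #|B|.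
  have sum1 : \big[Rplus/0]_(c : B) 1 = INR #|B| by rewrite rsum_const Rmult_1_r.
  rewrite -sum1; apply: Rle_trans pot_le; rewrite -[X in X <= _]Rmult_1_l.
  apply: (rsum_ge_term (F := fun c => 1 * potential setT setT f c)) => // c _.
  by rewrite Rmult_1_l; apply/Rlt_le/exp_pos.
apply: Rnot_lt_le => /exp_increasing.
rewrite exp_ln; last exact: Rlt_le_trans (exp_pos _) pot_b.
by rewrite -/(potential setT setT f b); lra.
Qed.

End Potential.

Close Scope R_scope.

Section Hall.
Variables (U V : finType) (adj : U -> V -> bool) (v0 : V).

Definition neighbours (Ts : {set V}) (Z : {set U}) := [set t in Ts | [exists b in Z, adj b t]].

Definition hall_condition (Bs : {set U}) (Ts : {set V}) :=
  forall Z : {set U}, Z \subset Bs -> #|Z| <= #|neighbours Ts Z|.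

Definition matching (g : U -> V) (Bs : {set U}) (Ts : {set V}) :=
  injects g Bs Ts /\ {in Bs, forall b, adj b (g b)}.

Lemma matchingS g Bs (Ts Ts' : {set V}) :
  Ts \subset Ts' -> matching g Bs Ts -> matching g Bs Ts'.
Proof. by move=> /subsetP sTT' [[gT g_inj] g_adj]; split=> //; split=> // b /gT /sTT'. Qed.

Lemma matching_neighbours g (Z : {set U}) Ts :
  matching g Z Ts -> matching g Z (neighbours Ts Z).
Proof.
move=> [[gT g_inj] g_adj]; split=> //; split=> // b Zb.
by rewrite inE gT //=; apply/existsP; exists b; rewrite Zb g_adj.
Qed.

Lemma matching_glue (Z Bs : {set U}) (Ts1 Ts2 : {set V}) g1 g2 :
  Z \subset Bs -> [disjoint Ts1 & Ts2] -> matching g1 Z Ts1 -> matching g2 (Bs :\: Z) Ts2 ->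
  matching (fun b => if b \in Z then g1 b else g2 b) Bs (Ts1 :|: Ts2).
Proof.
move=> sZB Ts12 [inj1 adj1] [inj2 adj2]; split; first exact: injects_glue.
by move=> b Bb; case: ifPn => Zb; [apply: adj1 | apply: adj2; rewrite inE Zb].
Qed.

Lemma hall_condition_sub (Z Bs : {set U}) Ts :
  Z \subset Bs -> hall_condition Bs Ts -> hall_condition Z Ts.
Proof. by move=> sZB hallB Y sYZ; apply/hallB/(subset_trans sYZ). Qed.

Lemma hall_condition_tight (Z0 Bs : {set U}) Ts :
  Z0 \subset Bs -> hall_condition Bs Ts -> #|neighbours Ts Z0| <= #|Z0| ->
  hall_condition (Bs :\: Z0) (Ts :\: neighbours Ts Z0).
Proof.
move=> sZB hallB tight Y sY.
have YZ0 : Y :&: Z0 = set0.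
  apply/setP=> x; rewrite !inE; apply/negbTE/andP => -[Yx Z0x].
  by move/subsetP: sY => /(_ x Yx); rewrite inE Z0x.
have card_YZ0 : #|Y :|: Z0| = #|Y| + #|Z0| by rewrite cardsU YZ0 cards0 subn0.
have sN : neighbours Ts (Y :|: Z0) \subset
          neighbours (Ts :\: neighbours Ts Z0) Y :|: neighbours Ts Z0.
  apply/subsetP=> t; rewrite !inE => /andP[Tt /existsP[b /andP[]]].
  rewrite inE => /orP[Yb | Z0b] adj_bt; apply/orP.
    case Nt: [exists b0 in Z0, adj b0 t]; [right | left]; rewrite Tt ?Nt //=.
    by apply/existsP; exists b; rewrite Yb.
  by right; rewrite Tt; apply/existsP; exists b; rewrite Z0b.
have := hallB (Y :|: Z0); rewrite subUset sZB (subset_trans sY (subsetDl _ _)) => /(_ isT).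
have := subset_leq_card sN; have [le_union _] := leq_card_setU
  (neighbours (Ts :\: neighbours Ts Z0) Y) (neighbours Ts Z0).
lia.
Qed.

Lemma hall_condition_slack (Bs : {set U}) (Ts : {set V}) b0 t0 :
  (forall Z : {set U}, Z \subset Bs -> Z != set0 -> Z != Bs -> #|Z| < #|neighbours Ts Z|) ->
  b0 \in Bs -> hall_condition (Bs :\ b0) (Ts :\ t0).
Proof.
move=> slack Bb0 Y sY; have [-> | [y Yy]] := set_0Vmem Y; first by rewrite cards0.
have sYB : Y \subset Bs := subset_trans sY (subsetDl _ _).
have nYB : Y != Bs.
  by apply: contraTneq Bb0 => <-; apply/negP => /(subsetP sY); rewrite !inE eqxx.
have lt : #|Y| < #|neighbours Ts Y| by apply: slack => //; apply/set0Pn; exists y.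
have sN : neighbours Ts Y :\ t0 \subset neighbours (Ts :\ t0) Y.
  by apply/subsetP => t; rewrite !inE => /andP[-> /andP[-> ->]].
have := subset_leq_card sN; have := cardsD1 t0 (neighbours Ts Y).
lia.
Qed.

Theorem hall_marriage (Bs : {set U}) (Ts : {set V}) :
  hall_condition Bs Ts -> exists g, matching g Bs Ts.
Proof.
elim: {Bs}_.+1 {-2}Bs (ltnSn #|Bs|) Ts => // k IH Bs ltBk Ts hallB.
have [-> | [b0 Bb0]] := set_0Vmem Bs.
  by exists (fun _ => v0); split; first split; move=> b; rewrite inE.
have [tight | no_tight] := boolP [exists Z : {set U},
  [&& Z \subset Bs, Z != set0, Z != Bs & #|neighbours Ts Z| <= #|Z|]].
- case/existsP: tight => Z0 /and4P[sZB nZ0 nZB tight].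
  have ltZB : #|Z0| < #|Bs| by apply: proper_card; rewrite properEneq nZB.
  have ltDB : #|Bs :\: Z0| < #|Bs|.
    have Z0_gt0 : 0 < #|Z0| by rewrite card_gt0.
    by rewrite cardsD (setIidPr sZB); lia.
  have [g1 mg1] := IH Z0 (leq_trans ltZB ltBk) Ts (hall_condition_sub sZB hallB).
  have [g2 mg2] := IH _ (leq_trans ltDB ltBk) _ (hall_condition_tight sZB hallB tight).
  exists (fun b => if b \in Z0 then g1 b else g2 b).
  apply: (matchingS _ (matching_glue sZB _ (matching_neighbours mg1) mg2)).
    by rewrite subUset subsetDl andbT; apply/subsetP => t; rewrite inE => /andP[].
  by rewrite disjoints_subset; apply/subsetP => t Nt; rewrite in_setC in_setD Nt.
- have [t0 Nt0] : exists t0, t0 \in neighbours Ts [set b0].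
    by apply/set0Pn; rewrite -card_gt0 -(cards1 b0); apply: hallB; rewrite sub1set.
  move: Nt0; rewrite inE => /andP[Tt0 /existsP[b /andP[/set1P -> adj_t0]]].
  have slack (Z : {set U}) : Z \subset Bs -> Z != set0 -> Z != Bs -> #|Z| < #|neighbours Ts Z|.
    move=> sZB nZ0 nZB; rewrite ltnNge; apply: contra no_tight => le_NZ.
    by apply/existsP; exists Z; rewrite sZB nZ0 nZB.
  have ltDB : #|Bs :\ b0| < k by move: ltBk; rewrite (cardsD1 b0) Bb0.
  have [g' mg'] := IH _ ltDB _ (hall_condition_slack t0 slack Bb0).
  exists (fun b => if b \in [set b0] then t0 else g' b); rewrite -(setD1K Tt0).
  apply: matching_glue => //; first by rewrite sub1set.
    by rewrite disjoints1 !inE eqxx.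
  split; first split=> [x _ | x y /set1P -> /set1P ->] //; first exact: set11.
  by move=> x /set1P ->.
Qed.

End Hall.

Section Stars.
Variables (n : nat) (H : bigraph n).
Hypothesis leaf_deg1 : forall t, degR H t = 1.

Definition centre (t : 'I_n) : 'I_n := odflt t [pick s | H s t].

Lemma edge_centre s t : H s t = (s == centre t).
Proof.
have /cards1P[x Hx] : #|[set s | H s t]| == 1 by rewrite -/(degR H t) leaf_deg1.
have H_x y : H y t = (y == x) by move/setP: Hx => /(_ y); rewrite !inE.
rewrite /centre H_x; case: pickP => [y | no_x] /=; first by rewrite H_x => /eqP ->.
by have := no_x x; rewrite H_x eqxx.
Qed.

Lemma card_centre_in (P : pred 'I_n) :
  #|[set t | P (centre t)]| = \sum_(s | P s) degL H s.
Proof.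
rewrite -sum1_card (partition_big centre P) => [|t]; last by rewrite inE.
apply: eq_bigr => s Ps; rewrite /degL -sum1_card; apply: eq_bigl => t.
by rewrite !inE edge_centre [s == _]eq_sym; case: eqP => [-> | _]; rewrite ?Ps ?andbF.
Qed.

Lemma sum_degL : \sum_s degL H s = n.
Proof.
rewrite -(card_centre_in predT) -[RHS]card_ord; apply: eq_card => t.
by rewrite inE.
Qed.

Lemma sum_degL_ID (P : pred 'I_n) :
  \sum_(s | P s) degL H s + \sum_(s | ~~ P s) degL H s = n.
Proof. by move: sum_degL; rewrite (bigID P). Qed.

End Stars.

Lemma bip_embeds_of_heavy_neighbourhoods n (G H : bigraph n) (phi : 'I_n -> 'I_n) :
  0 < n -> (forall t, degR H t = 1) -> injective phi ->
  (forall a b, n - degL G a <= \sum_(s | G (phi s) b) degL H s) -> bip_embeds H G.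
Proof.
move=> n_gt0 leaf_deg1 phi_inj heavy.
pose adj b t := G (phi (centre H t)) b.
have card_N Z : #|neighbours adj setT Z| =
    \sum_(s | [exists b in Z, G (phi s) b]) degL H s.
  by rewrite -card_centre_in //; apply: eq_card => t; rewrite !inE.
have hall : hall_condition adj setT setT.
  move=> Z _; rewrite card_N; have [-> | [b Zb]] := set_0Vmem Z; first by rewrite cards0.
  have [seen | /forallPn[s0 unseen]] := boolP [forall s, [exists b in Z, G (phi s) b]].
    rewrite (eq_bigl predT) => [|s]; last by rewrite (forallP seen).
    by rewrite sum_degL //; apply: leq_trans (max_card _) _; rewrite card_ord.
  have sZ : Z \subset ~: [set y | G (phi s0) y].
    apply/subsetP=> y Zy; rewrite !inE; apply: contra unseen => Gy.
    by apply/existsP; exists y; rewrite Zy.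
  apply: leq_trans (subset_leq_card sZ) _.
  rewrite cardsCs setCK card_ord.
  apply: leq_trans (heavy (phi s0) b) _; rewrite big_mkcond [X in _ <= X]big_mkcond.
  apply: leq_sum => s _; case: ifP => // Gb.
  by rewrite (_ : [exists _ in Z, _]) //; apply/existsP; exists b; rewrite Zb.
have [g [[_ g_inj] g_adj]] := hall_marriage (Ordinal n_gt0) hall.
have /injF_bij[psi gK psiK] : injective g by move=> x y; apply: g_inj; rewrite inE.
exists phi, psi; split; first exact: injF_bij phi_inj.
split; first by exists g.
move=> s t; rewrite edge_centre // => /eqP ->.
by have := g_adj (psi t) (in_setT _); rewrite /adj psiK.
Qed.

Open Scope R_scope.

Lemma deviation_below_half eps n d1 L W M Q : 0 < eps < 1/2 -> 1 <= d1 -> 0 < n ->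
  d1 * L < eps ^ 4 / 100 * n -> Q <= d1 * n -> M < (1/2 - eps) * n ->
  eps / (2 * d1) * (W - M) - (eps / (2 * d1)) ^ 2 * Q <= L -> W < n / 2.
Proof.
move=> eps_bd d1_ge1 n_gt0 L_bd Q_bd M_bd dev; set l := eps / (2 * d1) in dev.
have l_gt0 : 0 < l by apply: Rdiv_lt_0_compat; lra.
have l_d1 : l * d1 = eps / 2 by rewrite /l; field; lra.
have Q_l : l ^ 2 * Q <= l * (eps / 2 * n).
  rewrite -l_d1; have : 0 <= l ^ 2 by nra.
  nra.
have L_l : L < l * (eps ^ 3 / 50 * n).
  apply: (Rmult_lt_reg_l d1); first lra.
  have -> : d1 * (l * (eps ^ 3 / 50 * n)) = eps ^ 4 / 100 * n by rewrite /l; field; lra.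
  exact: L_bd.
have : l * (W - M) < l * (eps ^ 3 / 50 * n + eps / 2 * n) by rewrite Rmult_plus_distr_l; lra.
move/(Rmult_lt_reg_l _ _ _ l_gt0); have : eps ^ 3 <= eps by nra.
nra.
Qed.

Lemma star_max_degree eps n (H : bigraph n) : (1 < n)%nat ->
  (forall t, degR H t = 1%nat) ->
  (forall s, INR (degL H s) < eps ^ 4 / 100 * (INR n / ln (INR n))) ->
  exists2 m, (forall s, degL H s <= m)%nat &
    1 <= INR m /\ INR m * ln (INR n) < eps ^ 4 / 100 * INR n.
Proof.
move=> n_gt1 leaf_deg1 degH.
have n_ge2 : 2 <= INR n by apply: (le_INR 2); apply/leP.
have ln_gt0 : 0 < ln (INR n) by rewrite -ln_1; apply: ln_increasing; lra.
have n_gt0 : (0 < #|'I_n|)%nat by rewrite card_ord; apply: ltnW.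
have [s1 max_s1] := @eq_bigmax _ (degL H) n_gt0.
exists (degL H s1) => [s | ]; first by rewrite -max_s1; apply: leq_bigmax.
split.
  apply: (le_INR 1); apply/leP; rewrite lt0n; apply: contraTneq n_gt1 => deg0.
  rewrite -(sum_degL leaf_deg1) big1 // => s _; apply/eqP; rewrite -leqn0 -deg0 -max_s1.
  exact: leq_bigmax.
have := Rmult_lt_compat_r _ _ _ ln_gt0 (degH s1).
by have -> : eps ^ 4 / 100 * (INR n / ln (INR n)) * ln (INR n) = eps ^ 4 / 100 * INR n
  by field; lra.
Qed.

Lemma exists_balanced_centres eps n (G H : bigraph n) : 0 < eps < 1/2 -> (1 < n)%nat ->
  (forall b, INR (degR G b) > (1/2 + eps) * INR n) ->
  (forall s, INR (degL H s) < eps ^ 4 / 100 * (INR n / ln (INR n))) ->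
  (forall t, degR H t = 1%nat) ->
  exists phi : 'I_n -> 'I_n, injective phi /\
    forall b, INR (\sum_(s | ~~ G (phi s) b) degL H s) < INR n / 2.
Proof.
move=> eps_bd n_gt1 degG degH leaf_deg1.
have [m d_le [m_ge1 m_ln]] := star_max_degree n_gt1 leaf_deg1 degH.
set lam := eps / (2 * INR m).
have lam_ge0 : 0 <= lam by apply: Rlt_le; apply: Rdiv_lt_0_compat; lra.
have lam_d s : lam * INR (degL H s) <= 1/4.
  have : lam * INR (degL H s) <= lam * INR m by apply/Rmult_le_compat_l/le_INR/leP.
  have : lam * INR m = eps / 2 by rewrite /lam; field; lra.
  lra.
set X := fun b => [set a | ~~ G a b].
have [phi [phi_inj dev]] := exists_injection_low_potential X lam_ge0 lam_d.
exists phi; split => // b; have := dev b; rewrite card_ord.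
have weight_n : weight (degL H) setT = INR n.
  by rewrite /weight rsum_setT -INR_sum (sum_degL leaf_deg1).
have -> : hit_weight (degL H) X setT phi b = INR (\sum_(s | ~~ G (phi s) b) degL H s).
  rewrite /hit_weight rsum_setT INR_sum [RHS]big_mkcond; apply: eq_bigr => s _.
  by rewrite inE unfold_in /=; case: (G (phi s) b).
have n_gt0 : 0 < INR n by apply/lt_0_INR/ltP/ltnW.
move/(deviation_below_half eps_bd m_ge1 n_gt0 m_ln); apply.
  by rewrite -weight_n; apply: sq_weight_le => s _.
rewrite /mean_hit weight_n setIT cardsT card_ord.
have -> : INR n * INR #|X b| / INR n = INR #|X b| by field; lra.
have := degG b; have := cardsC [set a | G a b]; rewrite card_ord.
have -> : ~: [set a | G a b] = X b by apply/setP => a; rewrite !inE.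
move/(f_equal INR); rewrite plus_INR /degR; lra.
Qed.

Theorem theorem7 :
  forall eps : R, 0 < eps < 1/2 ->
  exists n0 : nat, forall n : nat, (n > n0)%nat ->
  forall G H : bigraph n,
    (forall a, INR (degL G a) > (1/2 + eps) * INR n) ->
    (forall b, INR (degR G b) > (1/2 + eps) * INR n) ->
    (forall s, INR (degL H s) < eps ^ 4 / 100 * (INR n / ln (INR n))) ->
    (forall t, degR H t = 1%nat) ->
    bip_embeds H G.
Proof.
move=> eps eps_bd; exists 1%nat => n n_gt1 G H degGL degGR degH leaf_deg1.
have [phi [phi_inj light]] := exists_balanced_centres eps_bd n_gt1 degGR degH leaf_deg1.
apply: (bip_embeds_of_heavy_neighbourhoods (ltnW n_gt1) leaf_deg1 phi_inj) => a b.
have /(f_equal INR) := sum_degL_ID leaf_deg1 (fun s => G (phi s) b); rewrite plus_INR.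
rewrite leq_subLR => sum_n; apply/leP/INR_le; rewrite plus_INR.
have n_gt0 : 0 < INR n by apply/lt_0_INR/ltP/ltnW.
have : 0 < eps * INR n by apply: Rmult_lt_0_compat; lra.
have := light b; have := degGL a; lra.
Qed.
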